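(* Let $n$ be a positive integer, $\vec{\jmath}=(j_1,\ldots,j_n)\in\mathbb{Z}_{\geq 0}^n$ and $\vec{e}=(e_1,\ldots,e_{n-1})\in\{1,3\}^{n-1}$. Assume that it is not the case that ($n\geq 2$, $j_1=0$ and $e_1=1$), and not the case that ($n\geq 2$, $j_n=0$ and $e_{n-1}=1$). Put $e_0=e_n=1$ and, for $k=0,\ldots,n$, define \[X(k)=\begin{cases} \zeta^\star(\{2\}^{j_1},e_1,\{2\}^{j_2},e_2,\ldots,\{2\}^{j_k},e_k)\cdot\zeta^\star(\{2\}^{j_n},e_{n-1},\{2\}^{j_{n-1}},e_{n-2},\ldots,\{2\}^{j_{k+1}},e_k) & \text{if } e_k=1,\\[4pt] \zeta^\star(\{2\}^{j_1},e_1,\ldots,\{2\}^{j_{k-1}},e_{k-1},\{2\}^{j_k+1})\cdot\zeta^\star(\{2\}^{j_n},e_{n-1},\ldots,\{2\}^{j_{k+2}},e_{k+1},\{2\}^{j_{k+1}+1}) & \text{if } e_k=3. \end{cases}\] Explicitly, in the case $e_k=1$ the first factor is the index consisting of the blocks $\{2\}^{j_i},e_i$ for $i=1,\ldots,k$ (for $k=0$ it is the empty index), and the second factor is the index consisting of the blocks $\{2\}^{j_i},e_{i-1}$ for $i=n,n-1,\ldots,k+1$ (for $k=n$ it is the empty index). Then \[\sum_{k=0}^n(-1)^kX(k)=0.\]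
   Context: For positive integers $k_1,\ldots,k_r$ with $k_1\geq 2$, $\zeta^\star(k_1,\ldots,k_r)=\sum_{m_1\geq\cdots\geq m_r\geq 1} m_1^{-k_1}\cdots m_r^{-k_r}$, and $\zeta^\star(\varnothing)=1$ for the empty index. $\{2\}^j$ denotes $j$ copies of $2$ (empty if $j=0$). $\{1,3\}^{n-1}$ denotes the set of $(n-1)$-tuples with entries in $\{1,3\}$. *)

From Stdlib Require Import Reals Lra Lia Arith List.
From Coquelicot Require Import Coquelicot.
Import ListNotations.
Open Scope R_scope.

(* Truncated multiple zeta-star sum:
   zs_trunc N [k1;...;kr] = sum_{N >= m1 >= m2 >= ... >= mr >= 1} m1^-k1 ... mr^-kr *)
Fixpoint zs_trunc (N : nat) (ks : list nat) : R :=
  match ks with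
  | [] => 1
  | k :: ks' =>
      sum_f_R0 (fun i => / (INR (S i)) ^ k * zs_trunc (S i) ks') (pred N)
      * (if (N =? 0)%nat then 0 else 1)
  end.

(* zeta_star s = sum_{m1 >= ... >= mr >= 1} m1^-k1 ... mr^-kr, defined as the limit
   of the truncations m1 <= N (the terms are nonnegative, so this is the value of
   the series whenever it converges; zeta_star [] = 1). *)
Definition zeta_star (ks : list nat) : R :=
  match ks with
  | [] => 1
  | _ => real (Lim_seq (fun N => zs_trunc N ks))
  end.

Definition eext (n : nat) (e : nat -> nat) (k : nat) : nat :=
  if (k =? 0)%nat then 1%nat else if (k =? n)%nat then 1%nat else e k.

Definition blocks (j a : nat -> nat) (is : list nat) : list nat :=
  flat_map (fun i => repeat 2%nat (j i) ++ [a i]) is.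

Definition Xk (n : nat) (j e : nat -> nat) (k : nat) : R :=
  let E := eext n e in
  if (E k =? 3)%nat then
    zeta_star (blocks j E (seq 1 (k - 1)%nat) ++ repeat 2%nat (j k + 1)%nat)
    * zeta_star (blocks j (fun i => E (i - 1)%nat) (rev (seq (k + 2)%nat (n - k - 1)%nat))
                 ++ repeat 2%nat (j (k + 1)%nat + 1)%nat)
  else
    zeta_star (blocks j E (seq 1 k))
    * zeta_star (blocks j (fun i => E (i - 1)%nat) (rev (seq (k + 1)%nat (n - k)%nat))).

(* Truncate every zeta-star sum at m_1 <= N and put c(p,q) = H_p + H_q - H_(p+q), H the
   harmonic numbers. For indices L and R let Z_N(L,R) be the product of their truncated
   sums, weighted by c(p,q) at their last summation variables p and q. Three elementary
   identities for sums of c(a,q) a^-s give, with La = L ++ [a],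
     Z(L1,R) + Z(L,R1) = zeta*_N(L1) zeta*_N(R1),    Z(L2,R) = Z(L,R2),
     Z(L3,R) + Z(L,R3) = zeta*_N(L2) zeta*_N(R2).
   Hence each truncated X(k) with 0 < k < n splits as A_k + B_k with A_k = B_(k+1), and the
   alternating sum telescopes to two boundary terms, sums of H_(N+q) - H_N over an index.
   These are O(H_N / N) for admissible indices, which the conditions on j_1 and j_n ensure,
   so letting N -> oo proves the theorem. *)

From Stdlib Require Import Reals Lra Lia Arith List.
From Coquelicot Require Import Coquelicot.
Import ListNotations.
Open Scope R_scope.

Fixpoint sum1 (f : nat -> R) (n : nat) : R :=
  match n with O => 0 | S m => sum1 f m + f (S m) end.

Lemma sum1_ext f g n :
  (forall m, (1 <= m <= n)%nat -> f m = g m) -> sum1 f n = sum1 g n.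
Proof.
  induction n as [|n IH]; intros H; simpl; [reflexivity|].
  rewrite IH, H; [reflexivity | lia | intros; apply H; lia].
Qed.

Lemma sum1_le f g n :
  (forall m, (1 <= m <= n)%nat -> f m <= g m) -> sum1 f n <= sum1 g n.
Proof.
  induction n as [|n IH]; intros H; simpl; [lra|].
  assert (sum1 f n <= sum1 g n) by (apply IH; intros; apply H; lia).
  assert (f (S n) <= g (S n)) by (apply H; lia).
  lra.
Qed.

Lemma sum1_plus f g n : sum1 (fun m => f m + g m) n = sum1 f n + sum1 g n.
Proof. induction n; simpl; [lra|]. rewrite IHn; ring. Qed.

Lemma sum1_minus f g n : sum1 (fun m => f m - g m) n = sum1 f n - sum1 g n.
Proof. induction n; simpl; [lra|]. rewrite IHn; ring. Qed.

Lemma sum1_scal c f n : sum1 (fun m => c * f m) n = c * sum1 f n.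
Proof. induction n; simpl; [lra|]. rewrite IHn; ring. Qed.

Lemma sum1_const c n : sum1 (fun _ => c) n = INR n * c.
Proof. induction n; cbn [sum1]; [simpl; ring|]. rewrite IHn, S_INR; ring. Qed.

Lemma sum1_nonneg f n : (forall m, (1 <= m <= n)%nat -> 0 <= f m) -> 0 <= sum1 f n.
Proof.
  intros H. apply Rle_trans with (sum1 (fun _ => 0) n).
  - rewrite sum1_const; lra.
  - apply sum1_le; exact H.
Qed.

Lemma sum1_le_n f a b :
  (forall m, (1 <= m)%nat -> 0 <= f m) -> (a <= b)%nat -> sum1 f a <= sum1 f b.
Proof.
  intros H Hab. induction Hab as [|b _ IH]; simpl; [lra|].
  assert (0 <= f (S b)) by (apply H; lia). lra.
Qed.

Lemma sum1_shift f n : sum1 f (S n) = f 1%nat + sum1 (fun m => f (S m)) n.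
Proof. induction n; cbn [sum1] in *; [ring|]. rewrite IHn; ring. Qed.

Lemma sum_f_R0_sum1 f n : sum_f_R0 (fun i => f (S i)) n = sum1 f (S n).
Proof. induction n; simpl; [ring|]. simpl in IHn. rewrite IHn; ring. Qed.

Lemma sum1_telescope_le f g c n :
  (forall m, (1 <= m)%nat -> f m <= g m - g (S m) + c m) ->
  sum1 f n <= g 1%nat - g (S n) + sum1 c n.
Proof.
  intros H. induction n; cbn [sum1]; [lra|].
  assert (f (S n) <= g (S n) - g (S (S n)) + c (S n)) by (apply H; lia).
  lra.
Qed.

Lemma INR_pos m : (1 <= m)%nat -> 0 < INR m.
Proof. intros; apply lt_0_INR; lia. Qed.

Lemma inv_pow_pos m k : (1 <= m)%nat -> 0 < / INR m ^ k.
Proof. intros; apply Rinv_0_lt_compat, pow_lt, INR_pos; lia. Qed.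

Lemma inv_pow_le m k k' : (1 <= m)%nat -> (k' <= k)%nat -> / INR m ^ k <= / INR m ^ k'.
Proof.
  intros Hm Hk. apply Rinv_le_contravar.
  - apply pow_lt, INR_pos; lia.
  - apply Rle_pow; [apply (le_INR 1); lia | exact Hk].
Qed.

Definition harmonic (k m : nat) : R := sum1 (fun p => / INR p ^ k) m.

Lemma harmonic_S k m : harmonic k (S m) = harmonic k m + / INR (S m) ^ k.
Proof. reflexivity. Qed.

Lemma harmonic_nonneg k m : 0 <= harmonic k m.
Proof. apply sum1_nonneg; intros; left; apply inv_pow_pos; lia. Qed.

Lemma harmonic_le k a b : (a <= b)%nat -> harmonic k a <= harmonic k b.
Proof. apply sum1_le_n; intros; left; apply inv_pow_pos; lia. Qed.

Lemma harmonic1_add a q :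
  sum1 (fun b => / INR (a + b) ^ 1) q = harmonic 1 (a + q) - harmonic 1 a.
Proof.
  induction q; cbn [sum1].
  - rewrite Nat.add_0_r; ring.
  - rewrite IHq, Nat.add_succ_r, harmonic_S; ring.
Qed.

Definition harm_gap (p q : nat) : R := harmonic 1 p + harmonic 1 q - harmonic 1 (p + q).

Lemma harm_gap_sym p q : harm_gap p q = harm_gap q p.
Proof. unfold harm_gap; rewrite Nat.add_comm; ring. Qed.

Lemma harm_gap_0 q : harm_gap 0 q = 0.
Proof. unfold harm_gap, harmonic; simpl; ring. Qed.

Lemma harm_gap_S p q :
  harm_gap (S p) q = harm_gap p q + (/ INR (S p) ^ 1 - / INR (S p + q) ^ 1).
Proof. unfold harm_gap; simpl (S p + q)%nat; rewrite !harmonic_S; ring. Qed.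

Definition gap_sum (k p q : nat) : R := sum1 (fun a => / INR a ^ k * harm_gap a q) p.

Lemma gap_sum_0 k q : gap_sum k q 0 = 0.
Proof.
  unfold gap_sum. rewrite (sum1_ext _ (fun _ => 0)), sum1_const; [ring|].
  intros; rewrite harm_gap_sym, harm_gap_0; ring.
Qed.

Lemma gap_sum_S k q p :
  gap_sum k q (S p) =
  gap_sum k q p + sum1 (fun b => / INR b ^ k * (/ INR (S p) ^ 1 - / INR (S p + b) ^ 1)) q.
Proof.
  unfold gap_sum. rewrite <- sum1_plus. apply sum1_ext; intros.
  rewrite !(harm_gap_sym _ (S p)), !(harm_gap_sym _ p), harm_gap_S; ring.
Qed.

Lemma gap_sum1 p q : gap_sum 1 p q + gap_sum 1 q p = harmonic 1 p * harmonic 1 q.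
Proof.
  induction p as [|p IH].
  - rewrite gap_sum_0. unfold gap_sum, harmonic; simpl; ring.
  - rewrite gap_sum_S.
    rewrite (sum1_ext _ (fun b => / INR (S p) ^ 1 * / INR (S p + b) ^ 1)).
    + rewrite sum1_scal, harmonic1_add.
      transitivity (harmonic 1 p * harmonic 1 q + / INR (S p) ^ 1 * harmonic 1 q);
        [rewrite <- IH | rewrite harmonic_S; ring].
      unfold gap_sum at 1; cbn [sum1]; fold (gap_sum 1 p q).
      unfold harm_gap; rewrite harmonic_S; ring.
    + intros b Hb. rewrite plus_INR.
      assert (0 < INR b) by (apply INR_pos; lia).
      assert (0 < INR (S p)) by (apply INR_pos; lia).
      field; lra.
Qed.

Lemma gap_sum2 p q : gap_sum 2 p q = gap_sum 2 q p.
Proof.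
  induction p as [|p IH].
  - rewrite gap_sum_0. reflexivity.
  - rewrite gap_sum_S, <- IH.
    rewrite (sum1_ext _ (fun b => / INR (S p) ^ 2 * (/ INR b ^ 1 - / INR (S p + b) ^ 1))).
    + rewrite sum1_scal, sum1_minus, harmonic1_add.
      unfold gap_sum at 1; cbn [sum1]; fold (gap_sum 2 p q).
      unfold harm_gap; fold (harmonic 1 q); ring.
    + intros b Hb. rewrite plus_INR.
      assert (0 < INR b) by (apply INR_pos; lia).
      assert (0 < INR (S p)) by (apply INR_pos; lia).
      field; lra.
Qed.

Lemma gap_sum3 p q : gap_sum 3 p q + gap_sum 3 q p = harmonic 2 p * harmonic 2 q.
Proof.
  induction p as [|p IH].
  - rewrite gap_sum_0. unfold gap_sum, harmonic; simpl; ring.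
  - rewrite gap_sum_S.
    rewrite (sum1_ext _ (fun b => / INR (S p) ^ 2 * / INR b ^ 2
        - / INR (S p) ^ 3 * / INR b ^ 1 + / INR (S p) ^ 3 * / INR (S p + b) ^ 1)).
    + rewrite !sum1_plus, sum1_minus, !sum1_scal, harmonic1_add.
      transitivity (harmonic 2 p * harmonic 2 q + / INR (S p) ^ 2 * harmonic 2 q);
        [rewrite <- IH | rewrite harmonic_S; ring].
      unfold gap_sum at 1; cbn [sum1]; fold (gap_sum 3 p q).
      unfold harm_gap; fold (harmonic 2 q) (harmonic 1 q); rewrite harmonic_S; ring.
    + intros b Hb. rewrite plus_INR.
      assert (0 < INR b) by (apply INR_pos; lia).
      assert (0 < INR (S p)) by (apply INR_pos; lia).
      field; lra.
Qed.

Fixpoint zs_weight (N : nat) (ks : list nat) (phi : nat -> R) {struct ks} : R :=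
  match ks with
  | [] => phi N
  | k :: ks' => sum1 (fun m => / INR m ^ k * zs_weight m ks' phi) N
  end.

Lemma zs_trunc_cons N k ks :
  zs_trunc N (k :: ks) = sum1 (fun m => / INR m ^ k * zs_trunc m ks) N.
Proof.
  destruct N as [|N]; [simpl; ring|].
  cbn [zs_trunc]. rewrite Rmult_1_r.
  exact (sum_f_R0_sum1 (fun m => / INR m ^ k * zs_trunc m ks) N).
Qed.

Lemma zs_weight_ext N ks phi psi :
  (forall m, (m <= N)%nat -> phi m = psi m) -> zs_weight N ks phi = zs_weight N ks psi.
Proof.
  revert N; induction ks as [|k ks IH]; intros N H; cbn [zs_weight].
  - apply H; lia.
  - apply sum1_ext; intros m Hm. rewrite (IH m); [reflexivity|].
    intros; apply H; lia.
Qed.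

Lemma zs_weight_1 N ks : zs_weight N ks (fun _ => 1) = zs_trunc N ks.
Proof.
  revert N; induction ks as [|k ks IH]; intros N; cbn [zs_weight]; [reflexivity|].
  rewrite zs_trunc_cons. apply sum1_ext; intros. rewrite IH; reflexivity.
Qed.

Lemma zs_weight_app N ks k phi :
  zs_weight N (ks ++ [k]) phi = zs_weight N ks (fun m => sum1 (fun p => / INR p ^ k * phi p) m).
Proof.
  revert N; induction ks as [|k' ks IH]; intros N; cbn [zs_weight app]; [reflexivity|].
  apply sum1_ext; intros. rewrite IH; reflexivity.
Qed.

Lemma zs_weight_plus N ks phi psi :
  zs_weight N ks (fun m => phi m + psi m) = zs_weight N ks phi + zs_weight N ks psi.
Proof.
  revert N; induction ks as [|k ks IH]; intros N; cbn [zs_weight]; [reflexivity|].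
  rewrite <- sum1_plus. apply sum1_ext; intros. rewrite IH; ring.
Qed.

Lemma zs_weight_scal N ks c phi : zs_weight N ks (fun m => c * phi m) = c * zs_weight N ks phi.
Proof.
  revert N; induction ks as [|k ks IH]; intros N; cbn [zs_weight]; [reflexivity|].
  rewrite <- sum1_scal. apply sum1_ext; intros. rewrite IH; ring.
Qed.

Lemma zs_weight_sum1 N ks f M :
  zs_weight N ks (fun q => sum1 (fun p => f p q) M) = sum1 (fun p => zs_weight N ks (f p)) M.
Proof.
  induction M as [|M IH]; cbn [sum1].
  - rewrite (zs_weight_ext N ks _ (fun _ => 0 * 0)) by (intros; ring).
    rewrite zs_weight_scal; ring.
  - rewrite zs_weight_plus, IH; reflexivity.
Qed.

Lemma zs_weight_le N ks phi psi :
  (forall m, (m <= N)%nat -> phi m <= psi m) -> zs_weight N ks phi <= zs_weight N ks psi.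
Proof.
  revert N; induction ks as [|k ks IH]; intros N H; cbn [zs_weight].
  - apply H; lia.
  - apply sum1_le; intros. apply Rmult_le_compat_l.
    + left; apply inv_pow_pos; lia.
    + apply IH; intros; apply H; lia.
Qed.

Lemma zs_weight_nonneg N ks phi :
  (forall m, (m <= N)%nat -> 0 <= phi m) -> 0 <= zs_weight N ks phi.
Proof.
  intros H. apply Rle_trans with (zs_weight N ks (fun m => 0 * 1)).
  - rewrite zs_weight_scal; lra.
  - apply zs_weight_le; intros m Hm. rewrite Rmult_0_l; auto.
Qed.

Lemma zs_trunc_app N ks k : zs_trunc N (ks ++ [k]) = zs_weight N ks (harmonic k).
Proof.
  rewrite <- zs_weight_1, zs_weight_app. apply zs_weight_ext; intros.
  apply sum1_ext; intros; ring.
Qed.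

Lemma zs_trunc_app_mul N ls rs k k' :
  zs_trunc N (ls ++ [k]) * zs_trunc N (rs ++ [k']) =
  zs_weight N ls (fun p => zs_weight N rs (fun q => harmonic k p * harmonic k' q)).
Proof.
  rewrite !zs_trunc_app, Rmult_comm, <- zs_weight_scal. apply zs_weight_ext; intros.
  rewrite zs_weight_scal; ring.
Qed.

Definition zs_pair (N : nat) (ls rs : list nat) : R :=
  zs_weight N ls (fun p => zs_weight N rs (harm_gap p)).

Lemma zs_pair_app_l N ls rs k :
  zs_pair N (ls ++ [k]) rs = zs_weight N ls (fun p => zs_weight N rs (fun q => gap_sum k p q)).
Proof.
  unfold zs_pair. rewrite zs_weight_app. apply zs_weight_ext; intros.
  unfold gap_sum. rewrite (zs_weight_sum1 N rs (fun a q => / INR a ^ k * harm_gap a q)).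
  apply sum1_ext; intros. rewrite zs_weight_scal; reflexivity.
Qed.

Lemma zs_pair_app_r N ls rs k :
  zs_pair N ls (rs ++ [k]) = zs_weight N ls (fun p => zs_weight N rs (fun q => gap_sum k q p)).
Proof.
  unfold zs_pair. apply zs_weight_ext; intros.
  rewrite zs_weight_app. apply zs_weight_ext; intros.
  apply sum1_ext; intros. rewrite harm_gap_sym; reflexivity.
Qed.

Lemma zs_pair_app1 N ls rs :
  zs_pair N (ls ++ [1%nat]) rs + zs_pair N ls (rs ++ [1%nat]) =
  zs_trunc N (ls ++ [1%nat]) * zs_trunc N (rs ++ [1%nat]).
Proof.
  rewrite zs_pair_app_l, zs_pair_app_r, zs_trunc_app_mul, <- zs_weight_plus.
  apply zs_weight_ext; intros. rewrite <- zs_weight_plus.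
  apply zs_weight_ext; intros. apply gap_sum1.
Qed.

Lemma zs_pair_app2 N ls rs : zs_pair N (ls ++ [2%nat]) rs = zs_pair N ls (rs ++ [2%nat]).
Proof.
  rewrite zs_pair_app_l, zs_pair_app_r.
  apply zs_weight_ext; intros. apply zs_weight_ext; intros. apply gap_sum2.
Qed.

Lemma zs_pair_app3 N ls rs :
  zs_pair N (ls ++ [3%nat]) rs + zs_pair N ls (rs ++ [3%nat]) =
  zs_trunc N (ls ++ [2%nat]) * zs_trunc N (rs ++ [2%nat]).
Proof.
  rewrite zs_pair_app_l, zs_pair_app_r, zs_trunc_app_mul, <- zs_weight_plus.
  apply zs_weight_ext; intros. rewrite <- zs_weight_plus.
  apply zs_weight_ext; intros. apply gap_sum3.
Qed.

Lemma zs_pair_repeat2 N ls rs a :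
  zs_pair N (ls ++ repeat 2%nat a) rs = zs_pair N ls (rs ++ repeat 2%nat a).
Proof.
  revert ls rs; induction a as [|a IH]; intros ls rs; cbn [repeat].
  - rewrite !app_nil_r; reflexivity.
  - replace (ls ++ 2%nat :: repeat 2%nat a) with ((ls ++ [2%nat]) ++ repeat 2%nat a)
      by (rewrite <- app_assoc; reflexivity).
    rewrite IH, zs_pair_app2, <- app_assoc, <- repeat_cons.
    reflexivity.
Qed.

Definition harm_tail (N : nat) (L : list nat) : R :=
  zs_weight N L (fun q => harmonic 1 (N + q) - harmonic 1 N).

Lemma zs_trunc_app1_l N L : zs_trunc N (L ++ [1%nat]) = zs_pair N [] L + harm_tail N L.
Proof.
  rewrite zs_trunc_app. unfold zs_pair, harm_tail; cbn [zs_weight].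
  rewrite <- zs_weight_plus. apply zs_weight_ext; intros.
  unfold harm_gap; ring.
Qed.

Lemma zs_trunc_app1_r N L : zs_trunc N (L ++ [1%nat]) = zs_pair N L [] + harm_tail N L.
Proof.
  rewrite zs_trunc_app. unfold zs_pair, harm_tail; cbn [zs_weight].
  rewrite <- zs_weight_plus. apply zs_weight_ext; intros.
  unfold harm_gap; rewrite Nat.add_comm; ring.
Qed.

Definition admissible (ks : list nat) : Prop := List.Forall (fun k => (1 <= k)%nat) ks /\ (2 <= hd 2 ks)%nat.

Lemma admissible_app_l ks ks' : admissible (ks ++ ks') -> admissible ks.
Proof.
  intros [Hpos Hhd]. apply List.Forall_app in Hpos. split; [tauto|].
  destruct ks; simpl in *; auto.
Qed.

Lemma zs_trunc_nonneg N ks : 0 <= zs_trunc N ks.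
Proof. rewrite <- zs_weight_1. apply zs_weight_nonneg; intros; lra. Qed.

Lemma zs_trunc_le_S N ks : zs_trunc N ks <= zs_trunc (S N) ks.
Proof.
  destruct ks as [|k ks]; [simpl; lra|].
  rewrite !zs_trunc_cons. cbn [sum1].
  assert (0 <= / INR (S N) ^ k * zs_trunc (S N) ks)
    by (apply Rmult_le_pos; [left; apply inv_pow_pos; lia | apply zs_trunc_nonneg]).
  lra.
Qed.

Lemma zs_trunc_le_harmonic_pow ks m :
  List.Forall (fun k => (1 <= k)%nat) ks -> zs_trunc m ks <= harmonic 1 m ^ length ks.
Proof.
  intros Hks. revert m. induction Hks as [|k ks Hk _ IH]; intros m; [simpl; lra|].
  rewrite zs_trunc_cons; cbn [length pow].
  apply Rle_trans with (sum1 (fun i => harmonic 1 m ^ length ks * / INR i ^ 1) m).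
  - apply sum1_le; intros i Hi. rewrite Rmult_comm.
    apply Rmult_le_compat.
    + apply zs_trunc_nonneg.
    + left; apply inv_pow_pos; lia.
    + apply Rle_trans with (harmonic 1 i ^ length ks); [apply IH|].
      apply pow_incr; split; [apply harmonic_nonneg | apply harmonic_le; lia].
    + apply inv_pow_le; lia.
  - rewrite sum1_scal. unfold harmonic at 2. right; ring.
Qed.

Lemma pow_sub_le a b r : 0 <= b <= a -> a ^ S r - b ^ S r <= INR (S r) * a ^ r * (a - b).
Proof.
  intros [Hb Hab]. induction r as [|r IH]; [simpl; lra|].
  assert (b ^ S r <= a ^ S r) by (apply pow_incr; lra).
  assert (a * (a ^ S r - b ^ S r) <= a * (INR (S r) * a ^ r * (a - b)))
    by (apply Rmult_le_compat_l; lra).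
  assert (b ^ S r * (a - b) <= a ^ S r * (a - b)) by (apply Rmult_le_compat_r; lra).
  replace (a ^ S (S r) - b ^ S (S r)) with (a * (a ^ S r - b ^ S r) + b ^ S r * (a - b))
    by (simpl; ring).
  replace (INR (S (S r)) * a ^ S r * (a - b))
    with (a * (INR (S r) * a ^ r * (a - b)) + a ^ S r * (a - b)) by (rewrite (S_INR (S r)); simpl; ring).
  lra.
Qed.

Lemma inv_sq_le_telescope m : (1 <= m)%nat -> / INR m ^ 2 <= 2 * / INR m - 2 * / INR (S m).
Proof.
  intros Hm. rewrite S_INR. assert (Hx : 1 <= INR m) by (apply (le_INR 1); lia).
  set (x := INR m) in *.
  replace (2 * / x - 2 * / (x + 1)) with (/ (x * (x + 1) / 2)) by (field; lra).
  apply Rinv_le_contravar; nra.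
Qed.

(* Summed over [m], this bounds [sum H_m^(r+1) / m^2] by [2 + 2 (r+1) sum H_m^r / m^2]. *)
Lemma harmonic_pow_telescope_step r m : (1 <= m)%nat ->
  / INR m ^ 2 * harmonic 1 m ^ S r <=
  2 * harmonic 1 m ^ S r / INR m - 2 * harmonic 1 (S m) ^ S r / INR (S m)
  + 2 * INR (S r) * (/ INR (S m) ^ 2 * harmonic 1 (S m) ^ r).
Proof.
  intros Hm.
  assert (Hx : 1 <= INR m) by (apply (le_INR 1); lia).
  assert (Hsq := inv_sq_le_telescope m Hm).
  rewrite harmonic_S, pow_1, (S_INR m) in *.
  set (x := INR m) in *. set (b := harmonic 1 m).
  assert (Hb : 0 <= b) by apply harmonic_nonneg.
  assert (Hy : 0 < / (x + 1)) by (apply Rinv_0_lt_compat; lra).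
  assert (Hd := pow_sub_le (b + / (x + 1)) b r ltac:(lra)).
  replace (b + / (x + 1) - b) with (/ (x + 1)) in Hd by ring.
  set (A := (b + / (x + 1)) ^ S r) in *. set (B := b ^ S r) in *.
  set (P := (b + / (x + 1)) ^ r) in *.
  assert (0 <= B) by (apply pow_le; lra).
  assert (E1 : / x ^ 2 * B <= (2 * / x - 2 * / (x + 1)) * B) by (apply Rmult_le_compat_r; lra).
  assert (E2 : (A - B) * / (x + 1) <= INR (S r) * P * / (x + 1) * / (x + 1))
    by (apply Rmult_le_compat_r; lra).
  replace (/ (x + 1) ^ 2 * P) with (P * / (x + 1) * / (x + 1)) by (field; lra).
  unfold Rdiv. lra.
Qed.

Lemma sum_inv_sq_harmonic_pow_bounded r :
  exists B, forall N, sum1 (fun m => / INR m ^ 2 * harmonic 1 m ^ r) N <= B.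
Proof.
  induction r as [|r [B HB]].
  - exists 2. intros N.
    apply Rle_trans with (2 * / INR 1 - 2 * / INR (S N) + sum1 (fun _ => 0) N).
    + apply (sum1_telescope_le _ (fun m => 2 * / INR m)). intros m Hm.
      rewrite pow_O, Rmult_1_r, Rplus_0_r. apply inv_sq_le_telescope, Hm.
    + rewrite sum1_const. simpl (INR 1). rewrite Rinv_1.
      assert (0 < / INR (S N)) by (apply Rinv_0_lt_compat, INR_pos; lia). lra.
  - exists (2 + 2 * INR (S r) * B). intros N.
    apply Rle_trans with (2 * harmonic 1 1 ^ S r / INR 1
        - 2 * harmonic 1 (S N) ^ S r / INR (S N)
        + sum1 (fun m => 2 * INR (S r) * (/ INR (S m) ^ 2 * harmonic 1 (S m) ^ r)) N).
    + apply (sum1_telescope_le _ (fun m => 2 * harmonic 1 m ^ S r / INR m)).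
      intros m Hm. apply harmonic_pow_telescope_step, Hm.
    + assert (H1 : harmonic 1 1 = 1) by (unfold harmonic; simpl; field).
      rewrite H1, pow1. simpl (INR 1).
      assert (0 <= 2 * harmonic 1 (S N) ^ S r / INR (S N)).
      { apply Rdiv_le_0_compat; [|apply INR_pos; lia].
        apply Rmult_le_pos; [lra | apply pow_le, harmonic_nonneg]. }
      assert (sum1 (fun m => / INR (S m) ^ 2 * harmonic 1 (S m) ^ r) N <= B).
      { apply Rle_trans with (2 := HB (S N)). rewrite sum1_shift.
        assert (0 <= / INR 1 ^ 2 * harmonic 1 1 ^ r)
          by (apply Rmult_le_pos; [left; apply inv_pow_pos; lia | apply pow_le, harmonic_nonneg]).
        lra. }
      rewrite sum1_scal.
      assert (0 <= 2 * INR (S r)) by (apply Rmult_le_pos; [lra | apply pos_INR]).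
      assert (2 * INR (S r) * sum1 (fun m => / INR (S m) ^ 2 * harmonic 1 (S m) ^ r) N
              <= 2 * INR (S r) * B) by (apply Rmult_le_compat_l; assumption).
      lra.
Qed.

Lemma zs_trunc_bounded ks : admissible ks -> exists B, forall N, zs_trunc N ks <= B.
Proof.
  intros [Hpos Hhd]. destruct ks as [|k ks]; [exists 1; intros; simpl; lra|].
  inversion Hpos as [|? ? _ Hks]; subst. simpl in Hhd.
  destruct (sum_inv_sq_harmonic_pow_bounded (length ks)) as [B HB].
  exists B. intros N. rewrite zs_trunc_cons.
  apply Rle_trans with (2 := HB N). apply sum1_le; intros m Hm.
  apply Rmult_le_compat.
  - left; apply inv_pow_pos; lia.
  - apply zs_trunc_nonneg.
  - apply inv_pow_le; lia.
  - apply zs_trunc_le_harmonic_pow, Hks.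
Qed.

Lemma zs_trunc_lim ks : admissible ks -> is_lim_seq (fun N => zs_trunc N ks) (zeta_star ks).
Proof.
  intros Hadm. destruct (zs_trunc_bounded ks Hadm) as [B HB].
  destruct (ex_finite_lim_seq_incr _ B (fun N => zs_trunc_le_S N ks) HB) as [l Hl].
  destruct ks as [|k ks]; [apply is_lim_seq_const|].
  unfold zeta_star. rewrite (is_lim_seq_unique _ _ Hl). exact Hl.
Qed.

Lemma harmonic1_div_lim : is_lim_seq (fun N => harmonic 1 N / INR N) 0.
Proof.
  assert (Hinv : Un_cv (fun i => / INR (S i) ^ 1) 0).
  { apply is_lim_seq_Reals, (is_lim_seq_incr_1 (fun i => / INR i ^ 1)).
    apply is_lim_seq_ext with (fun i => / INR i); [intros; rewrite pow_1; reflexivity|].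
    apply (is_lim_seq_inv _ p_infty); [apply is_lim_seq_INR | discriminate]. }
  apply is_lim_seq_ext_loc with (fun N => sum_f_R0 (fun i => / INR (S i) ^ 1) (pred N) / INR N).
  - exists 1%nat. intros [|N] HN; [lia|]. simpl pred.
    rewrite (sum_f_R0_sum1 (fun p => / INR p ^ 1)). reflexivity.
  - apply is_lim_seq_Reals, Cesaro_1, Hinv.
Qed.

Lemma harmonic1_add_sub_le N q :
  (1 <= N)%nat -> harmonic 1 (N + q) - harmonic 1 N <= INR q / INR N.
Proof.
  intros HN. rewrite <- harmonic1_add. unfold Rdiv. rewrite <- sum1_const.
  apply sum1_le; intros b Hb. rewrite pow_1.
  apply Rinv_le_contravar; [apply INR_pos; lia | apply le_INR; lia].
Qed.

Lemma sum1_inv_pow_mul_le k m :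
  (2 <= k)%nat -> sum1 (fun p => / INR p ^ k * INR p) m <= harmonic 1 m.
Proof.
  intros Hk. apply sum1_le; intros p Hp.
  assert (0 < INR p) by (apply INR_pos; lia).
  apply Rle_trans with (/ INR p ^ 2 * INR p).
  - apply Rmult_le_compat_r; [lra | apply inv_pow_le; lia].
  - right; field; lra.
Qed.

Lemma harm_tail_le N ls k : (1 <= N)%nat -> (2 <= k)%nat ->
  harm_tail N (ls ++ [k]) <= harmonic 1 N / INR N * zs_trunc N ls.
Proof.
  intros HN Hk. unfold harm_tail.
  apply Rle_trans with (zs_weight N (ls ++ [k]) (fun q => / INR N * INR q)).
  { apply zs_weight_le; intros q _. rewrite Rmult_comm. apply harmonic1_add_sub_le, HN. }
  rewrite zs_weight_scal, zs_weight_app, <- zs_weight_1.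
  unfold Rdiv. rewrite (Rmult_comm (harmonic 1 N)), Rmult_assoc,
    <- (zs_weight_scal N ls (harmonic 1 N) (fun _ => 1)).
  apply Rmult_le_compat_l; [left; apply Rinv_0_lt_compat, INR_pos; lia|].
  apply zs_weight_le; intros m Hm. rewrite Rmult_1_r.
  apply Rle_trans with (harmonic 1 m); [apply sum1_inv_pow_mul_le, Hk | apply harmonic_le, Hm].
Qed.

Lemma harm_tail_lim ls :
  admissible ls -> (2 <= last ls 0)%nat -> is_lim_seq (fun N => harm_tail N ls) 0.
Proof.
  intros Hadm Hlast.
  assert (Hne : ls <> []) by (intros ->; simpl in Hlast; lia).
  destruct (exists_last Hne) as [ls' [k ->]]. rewrite last_last in Hlast.
  destruct (zs_trunc_bounded ls' (admissible_app_l _ _ Hadm)) as [B HB].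
  apply is_lim_seq_le_le_loc with (fun _ => 0) (fun N => harmonic 1 N / INR N * B).
  - exists 1%nat. intros N HN. split.
    + apply zs_weight_nonneg; intros q _.
      assert (harmonic 1 N <= harmonic 1 (N + q)) by (apply harmonic_le; lia). lra.
    + apply Rle_trans with (1 := harm_tail_le N ls' k HN Hlast).
      apply Rmult_le_compat_l; [|apply HB].
      apply Rdiv_le_0_compat; [apply harmonic_nonneg | apply INR_pos; lia].
  - apply is_lim_seq_const.
  - replace (Finite 0) with (Finite (0 * B)) by (f_equal; ring).
    apply is_lim_seq_mult'; [apply harmonic1_div_lim | apply is_lim_seq_const].
Qed.

Lemma alternating_telescope (X A B : nat -> R) a b n : (1 <= n)%nat ->
  X 0%nat = A 0%nat + a -> X n = B n + b ->
  (forall k, (1 <= k <= n - 1)%nat -> X k = A k + B k) ->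
  (forall k, (k < n)%nat -> A k = B (S k)) ->
  sum_f_R0 (fun k => (-1) ^ k * X k) n = a + (-1) ^ n * b.
Proof.
  intros Hn H0 Hn' Hmid Hshift.
  assert (Hpartial : forall m, (m < n)%nat ->
            sum_f_R0 (fun k => (-1) ^ k * X k) m = a + (-1) ^ m * A m).
  { induction m as [|m IH]; intros Hm; [simpl; rewrite H0; ring|].
    rewrite tech5, IH, Hmid, <- (Hshift m) by lia. simpl; ring. }
  destruct n as [|n]; [lia|].
  rewrite tech5, Hpartial, Hn', <- Hshift by lia. simpl; ring.
Qed.

Lemma is_lim_seq_sum_f_R0 (u : nat -> nat -> R) (l : nat -> R) n :
  (forall k, (k <= n)%nat -> is_lim_seq (fun N => u N k) (l k)) ->
  is_lim_seq (fun N => sum_f_R0 (u N) n) (sum_f_R0 l n).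
Proof.
  induction n as [|n IH]; intros H; simpl; [apply H; lia|].
  apply is_lim_seq_plus'; [apply IH; intros; apply H | apply H]; lia.
Qed.

Lemma Forall_pos_repeat2 m : List.Forall (fun k => (1 <= k)%nat) (repeat 2%nat m).
Proof. apply List.Forall_forall; intros x Hx; apply repeat_spec in Hx; lia. Qed.

Lemma Forall_pos_blocks (j a : nat -> nat) l :
  (forall i, In i l -> (1 <= a i)%nat) -> List.Forall (fun k => (1 <= k)%nat) (blocks j a l).
Proof.
  induction l as [|i l IH]; intros H; [constructor|].
  unfold blocks; cbn [flat_map]; fold (blocks j a l).
  apply List.Forall_app; split; [apply List.Forall_app; split|].
  - apply Forall_pos_repeat2.
  - constructor; [apply H; left; reflexivity | constructor].
  - apply IH; intros; apply H; right; assumption.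
Qed.

Lemma hd_blocks_app (j a : nat -> nat) i l t :
  hd 2%nat (blocks j a (i :: l) ++ t) = match j i with O => a i | S _ => 2%nat end.
Proof. unfold blocks; cbn [flat_map]. destruct (j i); reflexivity. Qed.

Section Indices.

Variables (n : nat) (j E : nat -> nat).

(* With [E] standing for [e_0, ..., e_n]: [left_index k] is
   [({2}^j_1, e_1, ..., {2}^j_k, e_k)] and [right_index k] is
   [({2}^j_n, e_(n-1), ..., {2}^j_(k+1), e_k)]; the [_open] variants stop before
   [e_k], and [X_at zeta_star k] is X(k). *)
Definition left_index (k : nat) : list nat := blocks j E (seq 1 k).

Definition right_index (k : nat) : list nat :=
  blocks j (fun i => E (i - 1)%nat) (rev (seq (k + 1) (n - k))).

Definition left_open (k : nat) : list nat :=
  blocks j E (seq 1 (k - 1)) ++ repeat 2%nat (j k).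

Definition right_open (k : nat) : list nat :=
  blocks j (fun i => E (i - 1)%nat) (rev (seq (k + 2) (n - k - 1)))
  ++ repeat 2%nat (j (k + 1)%nat).

Definition X_at (z : list nat -> R) (k : nat) : R :=
  if (E k =? 3)%nat then z (left_open k ++ [2%nat]) * z (right_open k ++ [2%nat])
  else z (left_index k) * z (right_index k).

Lemma left_index_open k : (1 <= k)%nat -> left_index k = left_open k ++ [E k].
Proof.
  intros Hk. destruct k as [|k]; [lia|]. unfold left_index, left_open.
  replace (S k - 1)%nat with k by lia.
  rewrite seq_S; unfold blocks; rewrite flat_map_app; cbn [flat_map].
  rewrite app_nil_r, app_assoc. reflexivity.
Qed.

Lemma left_open_S k : left_open (S k) = left_index k ++ repeat 2%nat (j (S k)).
Proof. unfold left_open, left_index. replace (S k - 1)%nat with k by lia. reflexivity. Qed.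

Lemma right_index_open k : (k < n)%nat -> right_index k = right_open k ++ [E k].
Proof.
  intros Hk. unfold right_index, right_open.
  replace (seq (k + 1) (n - k)) with (seq (k + 1) (S (n - k - 1))) by (f_equal; lia).
  cbn [seq rev]. replace (S (k + 1)) with (k + 2)%nat by lia.
  unfold blocks; rewrite flat_map_app; cbn [flat_map].
  replace (k + 1 - 1)%nat with k by lia.
  rewrite app_nil_r, app_assoc. reflexivity.
Qed.

Lemma right_open_S k : right_open k = right_index (S k) ++ repeat 2%nat (j (S k)).
Proof.
  unfold right_open, right_index.
  replace (k + 2)%nat with (S k + 1)%nat by lia.
  replace (n - k - 1)%nat with (n - S k)%nat by lia.
  replace (k + 1)%nat with (S k) by lia. reflexivity.
Qed.

Lemma right_index_n : right_index n = [].
Proof. unfold right_index. rewrite Nat.sub_diag. reflexivity. Qed.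

Hypothesis n_pos : (1 <= n)%nat.
Hypothesis E_0 : E 0%nat = 1%nat.
Hypothesis E_n : E n = 1%nat.
Hypothesis E_mid : forall k, (1 <= k <= n - 1)%nat -> E k = 1%nat \/ E k = 3%nat.

Lemma X_at_trunc_mid N k : (1 <= k <= n - 1)%nat ->
  X_at (zs_trunc N) k =
  zs_pair N (left_index k) (right_open k) + zs_pair N (left_open k) (right_index k).
Proof.
  intros Hk. unfold X_at. rewrite (left_index_open k), (right_index_open k) by lia.
  destruct (E_mid k Hk) as [-> | ->]; cbn [Nat.eqb].
  - symmetry; apply zs_pair_app1.
  - symmetry; apply zs_pair_app3.
Qed.

Lemma X_at_trunc_0 N :
  X_at (zs_trunc N) 0 = zs_pair N (left_index 0) (right_open 0) + harm_tail N (right_open 0).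
Proof.
  unfold X_at. rewrite E_0, (right_index_open 0), E_0 by lia. cbn [Nat.eqb left_index seq].
  replace (zs_trunc N (blocks j E [])) with 1 by reflexivity.
  rewrite Rmult_1_l. apply zs_trunc_app1_l.
Qed.

Lemma X_at_trunc_n N :
  X_at (zs_trunc N) n = zs_pair N (left_open n) (right_index n) + harm_tail N (left_open n).
Proof.
  unfold X_at. rewrite E_n, (left_index_open n), E_n, right_index_n by lia. cbn [Nat.eqb].
  replace (zs_trunc N []) with 1 by reflexivity.
  rewrite Rmult_1_r. apply zs_trunc_app1_r.
Qed.

Lemma alternating_sum_X_at_trunc N :
  sum_f_R0 (fun k => (-1) ^ k * X_at (zs_trunc N) k) n =
  harm_tail N (right_open 0) + (-1) ^ n * harm_tail N (left_open n).
Proof.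
  apply alternating_telescope
    with (A := fun k => zs_pair N (left_index k) (right_open k))
         (B := fun k => zs_pair N (left_open k) (right_index k)).
  - exact n_pos.
  - apply X_at_trunc_0.
  - apply X_at_trunc_n.
  - apply X_at_trunc_mid.
  - intros k _. rewrite right_open_S, left_open_S. symmetry; apply zs_pair_repeat2.
Qed.

Lemma E_pos i : (i <= n)%nat -> (1 <= E i)%nat.
Proof.
  intros Hi. destruct (Nat.eq_dec i 0) as [->|]; [rewrite E_0; lia|].
  destruct (Nat.eq_dec i n) as [->|]; [rewrite E_n; lia|].
  destruct (E_mid i) as [-> | ->]; lia.
Qed.

Section Admissible.

Hypothesis j_1 : j 1%nat = 0%nat -> E 1%nat = 3%nat.
Hypothesis j_n : j n = 0%nat -> E (n - 1)%nat = 3%nat.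

Lemma hd_left_index k t : (2 <= hd 2 t)%nat -> (2 <= hd 2 (left_index k ++ t))%nat.
Proof.
  intros Ht. destruct k as [|k]; [exact Ht|].
  unfold left_index; cbn [seq]. rewrite hd_blocks_app.
  destruct (j 1%nat) eqn:Hj; [rewrite j_1 by reflexivity|]; lia.
Qed.

Lemma hd_right_index k t : (2 <= hd 2 t)%nat -> (2 <= hd 2 (right_index k ++ t))%nat.
Proof.
  intros Ht. unfold right_index.
  destruct (n - k)%nat as [|m] eqn:Hm; [exact Ht|].
  rewrite seq_S, rev_app_distr; cbn [rev app]. rewrite hd_blocks_app.
  replace (k + 1 + m)%nat with n by lia.
  destruct (j n) eqn:Hj; [rewrite j_n by reflexivity|]; lia.
Qed.

Lemma admissible_left_index k : (k <= n)%nat -> admissible (left_index k).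
Proof.
  intros Hk. split.
  - apply Forall_pos_blocks; intros i Hi. apply in_seq in Hi. apply E_pos; lia.
  - rewrite <- (app_nil_r (left_index k)). apply hd_left_index; simpl; lia.
Qed.

Lemma admissible_right_index k : admissible (right_index k).
Proof.
  split.
  - apply Forall_pos_blocks; intros i Hi. apply in_rev, in_seq in Hi. apply E_pos; lia.
  - rewrite <- (app_nil_r (right_index k)). apply hd_right_index; simpl; lia.
Qed.

Lemma admissible_left_open k : (k <= n)%nat -> admissible (left_open k ++ [2%nat]).
Proof.
  intros Hk. unfold left_open. rewrite <- app_assoc, <- repeat_cons.
  change (blocks j E (seq 1 (k - 1))) with (left_index (k - 1)).
  destruct (admissible_left_index (k - 1) ltac:(lia)) as [Hpos _]. split.
  - apply List.Forall_app; split; [exact Hpos | apply (Forall_pos_repeat2 (S (j k)))].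
  - apply hd_left_index; simpl; lia.
Qed.

Lemma admissible_right_open k : admissible (right_open k ++ [2%nat]).
Proof.
  rewrite right_open_S, <- app_assoc, <- repeat_cons.
  destruct (admissible_right_index (S k)) as [Hpos _]. split.
  - apply List.Forall_app; split; [exact Hpos | apply (Forall_pos_repeat2 (S (j (S k))))].
  - apply hd_right_index; simpl; lia.
Qed.

Lemma X_at_lim k : (k <= n)%nat ->
  is_lim_seq (fun N => X_at (zs_trunc N) k) (X_at zeta_star k).
Proof.
  intros Hk. unfold X_at.
  destruct (E k =? 3)%nat; apply is_lim_seq_mult'; apply zs_trunc_lim.
  - apply admissible_left_open, Hk.
  - apply admissible_right_open.
  - apply admissible_left_index, Hk.
  - apply admissible_right_index.
Qed.

Lemma last_app_repeat2 ls a : last (ls ++ repeat 2%nat (S a)) 0%nat = 2%nat.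
Proof. cbn [repeat]. rewrite repeat_cons, app_assoc. apply last_last. Qed.

Lemma right_tail_lim : is_lim_seq (fun N => harm_tail N (right_open 0)) 0.
Proof.
  apply harm_tail_lim; [exact (admissible_app_l _ _ (admissible_right_open 0))|].
  rewrite right_open_S. destruct (j 1%nat) as [|a] eqn:Hj; [|rewrite last_app_repeat2; lia].
  assert (HE1 : E 1%nat = 3%nat) by (apply j_1; reflexivity).
  assert (n <> 1%nat) by (intros Hn1; rewrite Hn1 in E_n; congruence).
  rewrite app_nil_r, (right_index_open 1) by lia. rewrite last_last. lia.
Qed.

Lemma left_tail_lim : is_lim_seq (fun N => harm_tail N (left_open n)) 0.
Proof.
  apply harm_tail_lim; [exact (admissible_app_l _ _ (admissible_left_open n (le_n n)))|].
  replace (left_open n) with (left_index (n - 1) ++ repeat 2%nat (j n)) by reflexivity.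
  destruct (j n) as [|a] eqn:Hj; [|rewrite last_app_repeat2; lia].
  assert (HEn : E (n - 1)%nat = 3%nat) by (apply j_n; reflexivity).
  assert (n <> 1%nat) by (intros Hn1; rewrite Hn1 in HEn; simpl in HEn; congruence).
  rewrite app_nil_r, (left_index_open (n - 1)) by lia. rewrite last_last. lia.
Qed.

Lemma alternating_sum_X_at : sum_f_R0 (fun k => (-1) ^ k * X_at zeta_star k) n = 0.
Proof.
  set (S N := sum_f_R0 (fun k => (-1) ^ k * X_at (zs_trunc N) k) n).
  assert (Hlim : is_lim_seq S (sum_f_R0 (fun k => (-1) ^ k * X_at zeta_star k) n)).
  { apply (is_lim_seq_sum_f_R0 (fun N k => (-1) ^ k * X_at (zs_trunc N) k)).
    intros k Hk. apply is_lim_seq_mult'; [apply is_lim_seq_const | apply X_at_lim, Hk]. }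
  assert (Hzero : is_lim_seq S 0).
  { apply is_lim_seq_ext with
      (fun N => harm_tail N (right_open 0) + (-1) ^ n * harm_tail N (left_open n)).
    { intros N; symmetry; apply alternating_sum_X_at_trunc. }
    replace 0 with (0 + (-1) ^ n * 0) by ring.
    apply is_lim_seq_plus'; [apply right_tail_lim|].
    apply is_lim_seq_mult'; [apply is_lim_seq_const | apply left_tail_lim]. }
  apply is_lim_seq_unique in Hlim, Hzero. rewrite Hlim in Hzero. injection Hzero; auto.
Qed.

End Admissible.

End Indices.

Lemma Xk_X_at n j e k : Xk n j e k = X_at n j (eext n e) zeta_star k.
Proof.
  unfold Xk, X_at, left_open, right_open. rewrite !repeat_app, <- !app_assoc.
  reflexivity.
Qed.

Lemma eext_n n e : (1 <= n)%nat -> eext n e n = 1%nat.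
Proof. intros Hn. unfold eext. destruct n; [lia|]. rewrite Nat.eqb_refl. reflexivity. Qed.

Lemma eext_mid n e k : (1 <= k <= n - 1)%nat -> eext n e k = e k.
Proof.
  intros Hk. unfold eext.
  destruct (Nat.eqb_spec k 0), (Nat.eqb_spec k n); [lia ..| reflexivity].
Qed.



Theorem theorem3p1 (n : nat) (j e : nat -> nat) :
  (1 <= n)%nat ->
  (forall i, (1 <= i <= n - 1)%nat -> e i = 1%nat \/ e i = 3%nat) ->
  ~ ((2 <= n)%nat /\ j 1%nat = 0%nat /\ e 1%nat = 1%nat) ->
  ~ ((2 <= n)%nat /\ j n = 0%nat /\ e (n - 1)%nat = 1%nat) ->
  sum_f_R0 (fun k => (-1) ^ k * Xk n j e k) n = 0.
Proof.
  intros Hn He Hj1 Hjn.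
  destruct (Nat.eq_dec n 1) as [-> | Hn1].
  { (* X(0) and X(1) are the same, possibly divergent, value *)
    unfold Xk, eext; simpl. ring. }
  rewrite (sum_eq _ (fun k => (-1) ^ k * X_at n j (eext n e) zeta_star k))
    by (intros; rewrite Xk_X_at; reflexivity).
  apply alternating_sum_X_at.
  - exact Hn.
  - reflexivity.
  - apply eext_n, Hn.
  - intros k Hk. rewrite eext_mid by exact Hk. apply He, Hk.
  - intros Hj. rewrite eext_mid by lia.
    destruct (He 1%nat) as [He1 | He1]; [lia | exfalso; apply Hj1; lia | exact He1].
  - intros Hj. rewrite eext_mid by lia.
    destruct (He (n - 1)%nat) as [He1 | He1]; [lia | exfalso; apply Hjn; lia | exact He1].
Qed.
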